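(* Let $X$ be a $*$-bimodule for a unital complex $*$-algebra $A$, let $F$ be a hermitian linear functional on $X$ (i.e. $F(x^+)=\overline{F(x)}$) and let $f$ be a positive linear functional on $A$. Suppose that for each $x\in X$ there is a constant $C_x>0$ such that $$|F(a^+\cdot x)|^2\le C_x\, f(a^+a)\quad\text{for all } a\in A.$$ Let $\rho_f$ be the GNS representation of $f$ on $\mathcal{D}_f$ with cyclic vector $\varphi_f$. Then there exists a $*$-representation $(\theta_F,\rho_f)$ of the $*$-bimodule $X$ on $\mathcal{D}_f$ such that $$F(a\cdot x\cdot b)=\langle\theta_F(x)\rho_f(b)\varphi_f,\rho_f(a^+)\varphi_f\rangle\quad\text{for all } a,b\in A,\ x\in X.$$ Moreover, if $(\theta,\rho)$ is another $*$-representation of $X$ on a complex inner product space $(\mathcal{D},(\cdot,\cdot))$ with Hilbert space completion $\mathcal{H}$ and $\psi\in\mathcal{D}$ satisfies $\rho(A)\psi=\mathcal{D}$, $f(a)=(\rho(a)\psi,\psi)$ for $a\in A$, and $F(a\cdot x\cdot b)=(\theta(x)\rho(b)\psi,\rho(a^+)\psi)$ for all $a,b\in A$, $x\in X$, then there is a unitary operator $U:\mathcal{H}_f\to\mathcal{H}$ with $U\varphi_f=\psi$, $U\mathcal{D}_f=\mathcal{D}$, $\rho(a)=U\rho_f(a)U^{-1}$ and $\theta(x)=U\theta_F(x)U^{-1}$ for all $a\in A$, $x\in X$.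
   Context: A $*$-bimodule $X$ for $A$: a complex $A$-bimodule (unital left and right $A$-module with $(a\cdot x)\cdot b=a\cdot(x\cdot b)$) with conjugate-linear involution $x\mapsto x^+$, $(x^+)^+=x$, satisfying $(a\cdot x\cdot b)^+=b^+\cdot x^+\cdot a^+$. For a complex inner product space $\mathcal{D}$ with completion $\mathcal{H}$, $\mathcal{L}^+(\mathcal{D},\mathcal{H})$ is the set of linear operators $t:\mathcal{D}\to\mathcal{H}$ with $\mathcal{D}(t^* )\supseteq\mathcal{D}$, $t^+:=t^*|_{\mathcal{D}}$. A $*$-representation of $A$ on $\mathcal{D}$ is an algebra homomorphism $\rho$ into linear operators on $\mathcal{D}$ with $\langle\rho(a)\varphi,\psi\rangle=\langle\varphi,\rho(a^+)\psi\rangle$, nondegenerate if $\rho(1)=I$. A $*$-representation of $X$ on $\mathcal{D}$ is a pair $(\theta,\rho)$ with $\rho$ a nondegenerate $*$-representation of $A$ on $\mathcal{D}$ and $\theta:X\to\mathcal{L}^+(\mathcal{D},\mathcal{H})$ linear with $\theta(x^+)=\theta(x)^+$ and $\langle\theta(a\cdot x\cdot b)\varphi,\psi\rangle=\langle\theta(x)\rho(b)\varphi,\rho(a^+)\psi\rangle$ for all $a,b\in A$, $x\in X$, $\varphi,\psi\in\mathcal{D}$. GNS representation of a positive functional $f$ (i.e. $f(a^+a)\ge0$): $\mathcal{N}_f=\{a\in A: f(a^+a)=0\}$, $\mathcal{D}_f=A/\mathcal{N}_f$ with inner product $\langle a+\mathcal{N}_f,b+\mathcal{N}_f\rangle=f(b^+a)$,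 $\rho_f(a)(b+\mathcal{N}_f)=ab+\mathcal{N}_f$, $\varphi_f=1+\mathcal{N}_f$ (so $\mathcal{D}_f=\rho_f(A)\varphi_f$ and $f(a^+b)=\langle\rho_f(b)\varphi_f,\rho_f(a)\varphi_f\rangle$); $\mathcal{H}_f$ is the completion of $\mathcal{D}_f$. *)

From HB Require Import structures.
From mathcomp Require Import all_boot all_order all_algebra.
From mathcomp Require Import reals complex.
Set Implicit Arguments. Unset Strict Implicit. Unset Printing Implicit Defensive.
Import Order.TTheory GRing.Theory Num.Theory.
Local Open Scope ring_scope.

Section Defs.
Variable R : realType.
Local Notation C := (complex R).

Record star_algebra (A : algType C) (st : A -> A) : Prop := {
  st_conjlin : forall (c : C) (a b : A), st (c *: a + b) = c^* *: st a + st b;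
  st_invol   : forall a, st (st a) = a;
  st_mul     : forall a b, st (a * b) = st b * st a }.

(* lact a x = a . x , ract x b = x . b , xst x = x^+ *)
Record star_bimodule (A : algType C) (st : A -> A) (X : lmodType C)
    (lact : A -> X -> X) (ract : X -> A -> X) (xst : X -> X) : Prop := {
  lact_linA : forall (c : C) a b x, lact (c *: a + b) x = c *: lact a x + lact b x;
  lact_linX : forall (c : C) a x y, lact a (c *: x + y) = c *: lact a x + lact a y;
  ract_linA : forall (c : C) a b x, ract x (c *: a + b) = c *: ract x a + ract x b;
  ract_linX : forall (c : C) a x y, ract (c *: x + y) a = c *: ract x a + ract y a;
  lact1     : forall x, lact 1 x = x;
  ract1     : forall x, ract x 1 = x;
  lactM     : forall a b x, lact (a * b) x = lact a (lact b x);
  ractM     : forall a b x, ract x (a * b) = ract (ract x a) b;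
  lractA    : forall a b x, ract (lact a x) b = lact a (ract x b);
  xst_conjlin : forall (c : C) x y, xst (c *: x + y) = c^* *: xst x + xst y;
  xst_invol : forall x, xst (xst x) = x;
  xst_act   : forall a b x,
      xst (ract (lact a x) b) = ract (lact (st b) (xst x)) (st a) }.

(* squared distance ||x - y||^2 for an inner product ip (linear in the first
   argument, conjugate-linear in the second) *)
Definition sqdist (H : lmodType C) (ip : H -> H -> C) (x y : H) : C :=
  ip (x - y) (x - y).

Definition cauchy_seq (H : lmodType C) (ip : H -> H -> C) (u : nat -> H) :=
  forall e : C, 0 < e -> exists N : nat,
    forall m n, (N <= m)%N -> (N <= n)%N -> sqdist ip (u m) (u n) < e.

Definition converges_to (H : lmodType C) (ip : H -> H -> C) (u : nat -> H) (l : H) :=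
  forall e : C, 0 < e -> exists N : nat,
    forall n, (N <= n)%N -> sqdist ip (u n) l < e.

Record hilbert (H : lmodType C) (ip : H -> H -> C) : Prop := {
  ip_linl     : forall (c : C) x y z, ip (c *: x + y) z = c * ip x z + ip y z;
  ip_conjsym  : forall x y, ip y x = (ip x y)^*;
  ip_ge0      : forall x, 0 <= ip x x;
  ip_eq0      : forall x, ip x x = 0 -> x = 0;
  ip_complete : forall u : nat -> H, cauchy_seq ip u ->
                  exists l, converges_to ip u l }.

(* D is a dense linear subspace of the Hilbert space (H, ip); a complex inner
   product space D together with its Hilbert space completion H is modelled
   as such a pair (D with the restricted inner product). *)
Record dense_subspace (H : lmodType C) (ip : H -> H -> C) (D : H -> Prop) : Prop := {
  ds0     : D 0;
  dslin   : forall (c : C) x y, D x -> D y -> D (c *: x + y);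
  dsdense : forall (h : H) (e : C), 0 < e -> exists d, D d /\ sqdist ip h d < e }.

(* operators D -> H (values outside D are irrelevant) *)
Definition linear_on (H : lmodType C) (D : H -> Prop) (t : H -> H) :=
  forall (c : C) x y, D x -> D y -> t (c *: x + y) = c *: t x + t y.

(* t is in L^+(D,H): t : D -> H linear and D is contained in the domain of the
   Hilbert space adjoint t^*, i.e. for every psi in D there is t^* psi in H with
   <t phi, psi> = <phi, t^* psi> for all phi in D. *)
Definition Lplus (H : lmodType C) (ip : H -> H -> C) (D : H -> Prop) (t : H -> H) :=
  linear_on D t /\
  exists s : H -> H, forall phi psi, D phi -> D psi -> ip (t phi) psi = ip phi (s psi).

Record star_rep (A : algType C) (st : A -> A)
    (H : lmodType C) (ip : H -> H -> C) (D : H -> Prop) (rho : A -> H -> H) : Prop := {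
  rep_stable : forall a phi, D phi -> D (rho a phi);
  rep_linop  : forall a, linear_on D (rho a);
  rep_linA   : forall (c : C) a b phi, D phi -> rho (c *: a + b) phi = c *: rho a phi + rho b phi;
  rep_mul    : forall a b phi, D phi -> rho (a * b) phi = rho a (rho b phi);
  rep_star   : forall a phi psi, D phi -> D psi -> ip (rho a phi) psi = ip phi (rho (st a) psi);
  rep_nondeg : forall phi, D phi -> rho 1 phi = phi }.

Record bimod_rep (A : algType C) (st : A -> A) (X : lmodType C)
    (lact : A -> X -> X) (ract : X -> A -> X) (xst : X -> X)
    (H : lmodType C) (ip : H -> H -> C) (D : H -> Prop)
    (theta : X -> H -> H) (rho : A -> H -> H) : Prop := {
  brep_rho   : star_rep st ip D rho;
  brep_Lplus : forall x, Lplus ip D (theta x);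
  brep_lin   : forall (c : C) x y phi, D phi ->
                 theta (c *: x + y) phi = c *: theta x phi + theta y phi;
  brep_star  : forall x phi psi, D phi -> D psi ->
                 ip (theta x phi) psi = ip phi (theta (xst x) psi);
  brep_mod   : forall a b x phi psi, D phi -> D psi ->
                 ip (theta (ract (lact a x) b) phi) psi = ip (theta x (rho b phi)) (rho (st a) psi) }.

(* (Hf, ipf) is the Hilbert space completion of D_f = A / N_f, where pi is the
   quotient map A -> A/N_f composed with the embedding into Hf:
   <pi a, pi b> = f(b^+ a), and pi(A) = D_f is dense;
   rhof is the GNS representation rho_f(a)(b + N_f) = ab + N_f. *)
Record GNS (A : algType C) (st : A -> A) (f : A -> C)
    (Hf : lmodType C) (ipf : Hf -> Hf -> C) (pi : A -> Hf) (rhof : A -> Hf -> Hf) : Prop := {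
  gns_hilbert : hilbert ipf;
  gns_lin     : forall (c : C) a b, pi (c *: a + b) = c *: pi a + pi b;
  gns_ip      : forall a b, ipf (pi a) (pi b) = f (st b * a);
  gns_dense   : forall (h : Hf) (e : C), 0 < e -> exists a, sqdist ipf h (pi a) < e;
  gns_rho     : forall a b, rhof a (pi b) = pi (a * b) }.

Definition GNS_domain (A : algType C) (Hf : lmodType C) (pi : A -> Hf) : Hf -> Prop :=
  fun h => exists a, h = pi a.

Record unitary (H1 H2 : lmodType C) (ip1 : H1 -> H1 -> C) (ip2 : H2 -> H2 -> C)
    (U : H1 -> H2) : Prop := {
  un_lin  : forall (c : C) x y, U (c *: x + y) = c *: U x + U y;
  un_isom : forall x y, ip2 (U x) (U y) = ip1 x y;
  un_surj : forall y, exists x, U x = y }.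

End Defs.

(* Write <.,.> for inner products (linear on the left).
   1. A bounded conjugate-linear functional L, given on the range of a linear
      map p into a Hilbert space, is represented by a vector xi:
      <p a, xi> = L a.  We prove this (lemma [riesz]) variationally: a
      minimizing sequence of the energy ||p a||^2 - 2 Re (L a) is Cauchy by
      the parallelogram law, and its limit satisfies the Euler-Lagrange
      equation, which is the representation identity.
   2. By the boundedness hypothesis on F, for fixed x and b the functional
      a |-> conj (F (a^+ . x . b)) satisfies the hypothesis of 1 with
      p = pi; the representing vector depends only on pi b (lemma [F_null]),
      and defines thetaF x (pi b).  All properties of a *-representation of
      the bimodule then follow by comparing matrix coefficients against the
      dense set pi A (lemma [dense_unique]).
   3. For uniqueness, the unitary U is defined by <rho a psi, U h> = <pi a, h>
      (again by 1); it maps pi b to rho b psi, is onto, and is isometric since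
      <U h, U k> - <h, k> is a bounded functional of h vanishing on pi A. *)
From HB Require Import structures.
From mathcomp Require Import all_boot all_order all_algebra.
From mathcomp Require Import reals complex.
From mathcomp Require Import ring lra boolp classical_sets.
Import Order.TTheory GRing.Theory Num.Theory.
Local Open Scope ring_scope.
Set Implicit Arguments. Unset Strict Implicit. Unset Printing Implicit Defensive.

Notation re := complex.Re.
Notation im := complex.Im.

Section ComplexParts.
Variable R : realType.
Implicit Types x y : complex R.

Lemma reD x y : re (x + y) = re x + re y. Proof. by case: x; case: y. Qed.
Lemma imD x y : im (x + y) = im x + im y. Proof. by case: x; case: y. Qed.
Lemma reN x : re (- x) = - re x. Proof. by case: x. Qed.
Lemma imN x : im (- x) = - im x. Proof. by case: x. Qed.
Lemma reM x y : re (x * y) = re x * re y - im x * im y.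
Proof. by case: x; case: y. Qed.
Lemma imM x y : im (x * y) = re x * im y + im x * re y.
Proof. by case: x; case: y. Qed.
Lemma reJ x : re x^* = re x. Proof. by case: x. Qed.
Lemma imJ x : im x^* = - im x. Proof. by case: x. Qed.
End ComplexParts.

Ltac complex_parts := rewrite ?(reD, imD, reN, imN, reM, imM, reJ, imJ) /=.

Section ComplexModulus.
Variable R : realType.
Implicit Types x y : complex R.

Lemma complex_ext x y : re x = re y -> im x = im y -> x = y.
Proof. by case: x; case: y => ? ? ? ? /= -> ->. Qed.

Definition sqmod x : R := re x ^+ 2 + im x ^+ 2.

Lemma sqmod_ge0 x : 0 <= sqmod x.
Proof. by rewrite addr_ge0 ?sqr_ge0. Qed.

Lemma sqmodJ x : sqmod x^* = sqmod x.
Proof. by rewrite /sqmod reJ imJ sqrrN. Qed.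

Lemma sqmodB_le x y : sqmod (x - y) <= 2 * sqmod x + 2 * sqmod y.
Proof.
rewrite /sqmod; complex_parts.
by have := sqr_ge0 (re x + re y); have := sqr_ge0 (im x + im y); lra.
Qed.

Lemma complex_eq0 x : sqmod x = 0 -> x = 0.
Proof.
rewrite /sqmod => h; have := sqr_ge0 (re x); have := sqr_ge0 (im x) => ??.
by apply: complex_ext => /=; apply/eqP; rewrite -sqrf_eq0; apply/eqP; lra.
Qed.

Lemma complex_ge0 x : 0 <= x -> x = (re x)%:C%C /\ 0 <= re x.
Proof. by rewrite lecE /= => /andP[/eqP im0 ->]; split=> //; apply: complex_ext. Qed.
End ComplexModulus.

Section RealFacts.
Variable R : realType.

Lemma le_small_eq0 (r : R) : 0 <= r -> (forall e, 0 < e -> r <= e) -> r = 0.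
Proof.
move=> r0 small; apply/eqP; rewrite eq_le r0 andbT.
by apply/ler_addgt0Pr => e /small; rewrite add0r.
Qed.

(* If the quadratic [2 t d + t^2 n] stays above [-e] for every real [t],
   then [d^2 <= (n + 1) e]: this is the Euler-Lagrange estimate behind the
   variational proof of the Riesz representation theorem. *)
Lemma quadratic_lb (d n e : R) : 0 <= n ->
  (forall t, - e < 2 * t * d + t ^+ 2 * n) -> d ^+ 2 <= (n + 1) * e.
Proof.
move=> n0 hq; have n1 : 0 < n + 1 by lra.
have := hq (- d / (n + 1)).
have -> : 2 * (- d / (n + 1)) * d + (- d / (n + 1)) ^+ 2 * n
          = - (d ^+ 2 * (n + 2)) / (n + 1) ^+ 2.
  by field; rewrite gt_eqF.
rewrite mulNr ltrN2 ltr_pdivrMr ?exprn_gt0 // => h.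
rewrite -(ler_pM2r n1) (_ : _ * e * _ = e * (n + 1) ^+ 2); last by ring.
by apply/ltW/(le_lt_trans _ h); rewrite ler_wpM2l ?sqr_ge0 //; lra.
Qed.

Definition epsn (k : nat) : R := k.+1%:R^-1.

Lemma epsn_gt0 k : 0 < epsn k.
Proof. by rewrite invr_gt0 ltr0Sn. Qed.

Lemma epsn_small (e : R) : 0 < e -> exists N, forall k, (N <= k)%N -> epsn k < e.
Proof.
move=> e0; exists (Num.truncn e^-1) => k hk.
have le_k : epsn k <= epsn (Num.truncn e^-1).
  by rewrite /epsn lef_pV2 ?posrE ?ltr0Sn // ler_nat.
by apply: le_lt_trans le_k _; rewrite /epsn invf_plt ?posrE ?ltr0Sn // truncnS_gt.
Qed.
End RealFacts.

(* Consequences of the one-line linearity axiom [g (c *: a + b) = c *: g a + g b]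
   in which all linear maps of the statement are given. *)
Section LinearMaps.
Variables (R : realType) (U V : lmodType (complex R)) (g : U -> V).
Hypothesis glin : forall c a b, g (c *: a + b) = c *: g a + g b.

Lemma lin0 : g 0 = 0.
Proof.
have := glin 1 0 0; rewrite !scale1r addr0 => /eqP.
by rewrite -subr_eq subrr => /eqP <-.
Qed.
Lemma linD a b : g (a + b) = g a + g b.
Proof. by rewrite -[a in LHS]scale1r glin scale1r. Qed.
Lemma linZ c a : g (c *: a) = c *: g a.
Proof. by rewrite -[c *: a]addr0 glin lin0 addr0. Qed.
Lemma linB a b : g (a - b) = g a - g b.
Proof. by rewrite linD -scaleN1r linZ scaleN1r. Qed.
End LinearMaps.

Section InnerProduct.
Variables (R : realType) (H : lmodType (complex R)) (ip : H -> H -> complex R).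
Hypothesis Hh : hilbert ip.
Implicit Types (x y z : H) (c : complex R).

Let ip_lin z : forall c x y, ip (c *: x + y) z = c *: ip x z + ip y z.
Proof. exact: (fun c x y => ip_linl Hh c x y z). Qed.

Lemma ipDl x y z : ip (x + y) z = ip x z + ip y z.
Proof. exact: (@linD _ _ _ (ip^~ z) (ip_lin z)). Qed.
Lemma ipZl c x z : ip (c *: x) z = c * ip x z.
Proof. exact: (@linZ _ _ _ (ip^~ z) (ip_lin z)). Qed.
Lemma ipBl x y z : ip (x - y) z = ip x z - ip y z.
Proof. exact: (@linB _ _ _ (ip^~ z) (ip_lin z)). Qed.
Lemma ip0l z : ip 0 z = 0.
Proof. exact: (@lin0 _ _ _ (ip^~ z) (ip_lin z)). Qed.

Lemma ipDr x y z : ip z (x + y) = ip z x + ip z y.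
Proof. by rewrite !(ip_conjsym Hh _ z) ipDl rmorphD. Qed.
Lemma ipZr c x z : ip z (c *: x) = c^* * ip z x.
Proof. by rewrite !(ip_conjsym Hh _ z) ipZl rmorphM. Qed.
Lemma ipBr x y z : ip z (x - y) = ip z x - ip z y.
Proof. by rewrite !(ip_conjsym Hh _ z) ipBl rmorphB. Qed.
Lemma ip0r z : ip z 0 = 0.
Proof. by rewrite (ip_conjsym Hh) ip0l rmorph0. Qed.

Definition nrm x : R := re (ip x x).

Lemma ip_self x : ip x x = (nrm x)%:C%C.
Proof. exact: (complex_ge0 (ip_ge0 Hh x)).1. Qed.
Lemma nrm_ge0 x : 0 <= nrm x.
Proof. exact: (complex_ge0 (ip_ge0 Hh x)).2. Qed.
Lemma nrm_eq0 x : nrm x = 0 -> x = 0.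
Proof. by move=> h; apply: (ip_eq0 Hh); rewrite ip_self h. Qed.
Lemma sqdist_nrm x y : sqdist ip x y = (nrm (x - y))%:C%C.
Proof. exact: ip_self. Qed.

Lemma nrm_expand x y c :
  nrm (x + c *: y) = nrm x + 2 * (re c * re (ip x y) + im c * im (ip x y))
                     + (re c ^+ 2 + im c ^+ 2) * nrm y.
Proof.
rewrite /nrm !(ipDl, ipDr, ipZl, ipZr) (ip_conjsym Hh x y) !ip_self.
by move: (ip y x) => z; complex_parts; ring.
Qed.

Lemma nrmZ c x : nrm (c *: x) = sqmod c * nrm x.
Proof. by rewrite -[c *: x]add0r nrm_expand /sqmod /nrm !ip0l /=; ring. Qed.

Lemma parallelogram x y : nrm (x + y) + nrm (x - y) = 2 * nrm x + 2 * nrm y.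
Proof. by rewrite -[y in x + y]scale1r -scaleN1r !nrm_expand /=; ring. Qed.

(* Cauchy-Schwarz: [|<x, y>|^2 <= ||x||^2 ||y||^2]; minimize [||x + c y||^2]. *)
Lemma cauchy_schwarz x y : sqmod (ip x y) <= nrm x * nrm y.
Proof.
rewrite /sqmod; have [->|y0] := eqVneq y 0.
  by rewrite ip0r /nrm ip0r /= mulr0 expr0n /= addr0.
have n0 : 0 < nrm y.
  by rewrite lt_def nrm_ge0 andbT; apply: contra_neq y0; apply: nrm_eq0.
set a := re (ip x y); set b := im (ip x y).
have := nrm_ge0 (x + Complex (- a / nrm y) (- b / nrm y) *: y).
rewrite nrm_expand /= -/a -/b.
have -> : nrm x + 2 * (- a / nrm y * a + - b / nrm y * b)
    + ((- a / nrm y) ^+ 2 + (- b / nrm y) ^+ 2) * nrm y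
    = nrm x - (a ^+ 2 + b ^+ 2) / nrm y.
  by field; rewrite gt_eqF.
by rewrite subr_ge0 ler_pdivrMr // mulrC.
Qed.

Definition dense_img (T : Type) (p : T -> H) :=
  forall h (e : R), 0 < e -> exists a, nrm (h - p a) < e.

Lemma dense_bounded_zero T (p : T -> H) (G : H -> complex R) (K : R) :
  dense_img p -> (forall u v, G (u - v) = G u - G v) ->
  (forall a, G (p a) = 0) -> (forall u, sqmod (G u) <= K * nrm u) ->
  forall u, G u = 0.
Proof.
move=> dp GB G0 Gb u; apply: complex_eq0; apply: le_small_eq0 => [|e e0].
  exact: sqmod_ge0.
have K1 : 0 < `|K| + 1 by rewrite ltr_pwDr.
have [a ha] := dp u (e / (`|K| + 1)) (divr_gt0 e0 K1).
have -> : G u = G (u - p a) by rewrite GB G0 subr0.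
apply: (le_trans (Gb _)); rewrite ltr_pdivlMr // in ha.
by have := nrm_ge0 (u - p a); have := ler_norm K; nra.
Qed.

Lemma dense_unique T (p : T -> H) : dense_img p ->
  forall v w, (forall a, ip (p a) v = ip (p a) w) -> v = w.
Proof.
move=> dp v w hvw; apply/eqP; rewrite -subr_eq0; apply/eqP/nrm_eq0.
have G0 := @dense_bounded_zero T p (ip^~ (v - w)) (nrm (v - w)) dp.
rewrite /nrm G0 // => [u u'|a|u]; first exact: ipBl.
  by rewrite ipBr hvw subrr.
by rewrite mulrC cauchy_schwarz.
Qed.

(* If [|<p a, xi>|^2 <= M ||p a||^2] on a dense set, then [||xi||^2 <= 7 M]
   (a non-optimal constant suffices for our purposes). *)
Lemma dual_bound T (p : T -> H) (M : R) xi : dense_img p -> 0 <= M ->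
  (forall a, sqmod (ip (p a) xi) <= M * nrm (p a)) -> nrm xi <= 7 * M.
Proof.
move=> dp M0 hb; have [M00|Mn0] := eqVneq M 0.
  suff -> : xi = 0 by rewrite /nrm ip0r M00 mulr0.
  apply: (dense_unique dp) => a; rewrite ip0r; apply: complex_eq0.
  by apply/eqP; rewrite eq_le sqmod_ge0 andbT; have := hb a; rewrite M00 mul0r.
have Mpos : 0 < M by rewrite lt_def Mn0.
have [a ha] := dp xi M Mpos.
have hN : nrm xi = re (ip (xi - p a) xi) + re (ip (p a) xi).
  by rewrite /nrm -reD -ipDl subrK.
have h1 : re (ip (xi - p a) xi) ^+ 2 <= M * nrm xi.
  have := cauchy_schwarz (xi - p a) xi; have := nrm_ge0 xi.
  by rewrite /sqmod; have := sqr_ge0 (im (ip (xi - p a) xi)); nra.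
have hpa : nrm (p a) <= 2 * nrm xi + 2 * nrm (xi - p a).
  have e : xi - (xi - p a) = p a by rewrite opprB addrC subrK.
  have := parallelogram xi (xi - p a); rewrite e.
  by have := nrm_ge0 (xi + (xi - p a)); lra.
have h2 : re (ip (p a) xi) ^+ 2 <= M * (2 * nrm xi + 2 * M).
  have := hb a; rewrite /sqmod; have := sqr_ge0 (im (ip (p a) xi)).
  by have := nrm_ge0 (p a); nra.
have hsq : nrm xi ^+ 2 <= 6 * M * nrm xi + 4 * M ^+ 2.
  have := sqr_ge0 (re (ip (xi - p a) xi) - re (ip (p a) xi)).
  by rewrite hN in h1 h2 *; nra.
rewrite leNgt; apply/negP => hlt.
have N0 : 0 < nrm xi by apply: lt_trans hlt; rewrite pmulr_rgt0.
have : M * (nrm xi - 7 * M) > 0 by rewrite pmulr_rgt0 // subr_gt0.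
by nra.
Qed.

Lemma cauchy_nrm (u : nat -> H) :
  (forall e : R, 0 < e -> exists N, forall m n, (N <= m)%N -> (N <= n)%N ->
     nrm (u m - u n) < e) -> cauchy_seq ip u.
Proof.
move=> hu e; rewrite ltcE /= => /andP[/eqP ime e0].
have [N hN] := hu _ e0; exists N => m n hm hn.
by rewrite sqdist_nrm ltcE /= -ime eqxx hN.
Qed.

Lemma converges_nrm (u : nat -> H) l : converges_to ip u l ->
  forall e : R, 0 < e -> exists N, forall n, (N <= n)%N -> nrm (u n - l) < e.
Proof.
move=> hu e e0; have eC : (0 : complex R) < (e%:C)%C by rewrite ltcR.
have [N hN] := hu _ eC.
by exists N => n /hN; rewrite sqdist_nrm ltcR.
Qed.

End InnerProduct.

(* Riesz representation of a conjugate-linear functional [L] on a space [T],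
   bounded with respect to a linear map [p] of [T] into a Hilbert space: there
   is [xi] with [<p a, xi> = L a] (no density of the range of [p] is needed).
     The vector [xi] is obtained as the limit of a minimizing
   sequence of the energy [||p a||^2 - 2 Re (L a)]; the Euler-Lagrange equation
   of this variational problem is the representation identity. *)
Section Riesz.
Variables (R : realType) (H : lmodType (complex R)) (ip : H -> H -> complex R).
Hypothesis Hh : hilbert ip.
Variables (T : lmodType (complex R)) (p : T -> H) (L : T -> complex R) (M : R).
Hypothesis plin : forall c a b, p (c *: a + b) = c *: p a + p b.
Hypothesis Llin : forall c a b, L (c *: a + b) = c * L a + L b.
Hypothesis M0 : 0 <= M.
Hypothesis Lbound : forall a, sqmod (L a) <= M * nrm ip (p a).

(* [L] as a linear map into the regular module [complex R]. *)
Let Llin' : forall c a b, L (c *: a + b) = c *: L a + L b.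
Proof. exact: Llin. Qed.

Definition energy (a : T) : R := nrm ip (p a) - 2 * re (L a).

Lemma energy_lb a : - M <= energy a.
Proof.
rewrite /energy; have := Lbound a; rewrite /sqmod.
have := nrm_ge0 Hh (p a); have := sqr_ge0 (im (L a)).
move: (nrm ip (p a)) (re (L a)) (im (L a)) => n r i i0 n0 hb.
have h4 : (2 * r) ^+ 2 <= (n + M) ^+ 2 by have := sqr_ge0 (n - M); nra.
have : 0 <= n + M by apply: addr_ge0.
by nra.
Qed.

Lemma energy_midpoint a b : nrm ip (p a - p b)
  = 2 * energy a + 2 * energy b - 4 * energy (((2 : R)^-1)%:C%C *: (a + b)).
Proof.
rewrite /energy (linZ plin) (linZ Llin') (linD plin) (linD Llin') (nrmZ Hh).
have -> : nrm ip (p a + p b)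
          = 2 * nrm ip (p a) + 2 * nrm ip (p b) - nrm ip (p a - p b).
  by rewrite -parallelogram // addrK.
by rewrite /sqmod; complex_parts; field.
Qed.

Lemma energy_shift a b (t : R) : energy (a + (t%:C)%C *: b)
  = energy a + 2 * t * (re (ip (p b) (p a)) - re (L b)) + t ^+ 2 * nrm ip (p b).
Proof.
rewrite /energy (linD plin) (linD Llin') (linZ plin) (linZ Llin') (nrm_expand Hh).
by rewrite (ip_conjsym Hh (p a)); complex_parts; ring.
Qed.

Section MinimizingSequence.
Variables (m : R) (a_ : nat -> T).
Hypothesis m_lb : forall a, m <= energy a.
Hypothesis a_min : forall k, energy (a_ k) < m + epsn R k.

Lemma minimizing_cauchy : cauchy_seq ip (fun k => p (a_ k)).
Proof.
apply: (cauchy_nrm Hh) => e e0.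
have [N hN] := epsn_small (divr_gt0 e0 (ltr0Sn R 3)).
exists N => i j hi hj; rewrite energy_midpoint.
have := m_lb (((2 : R)^-1)%:C%C *: (a_ i + a_ j)).
have := a_min i; have := a_min j; have := hN i hi; have := hN j hj.
by lra.
Qed.

(* The Euler-Lagrange equation holds at the limit [xi] of the sequence: the
   first variation [delta k] of the energy at [a_ k] in the direction [b]
   satisfies [delta k ^+ 2 <= (n + 1) epsn k] by minimality ([quadratic_lb]),
   and converges to the first variation at [xi]. *)
Lemma euler_lagrange xi : converges_to ip (fun k => p (a_ k)) xi ->
  forall b, re (ip (p b) xi) = re (L b).
Proof.
move=> lim_xi b; set n := nrm ip (p b).
pose delta k := re (ip (p b) (p (a_ k))) - re (L b).
have n0 : 0 <= n := nrm_ge0 Hh (p b).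
have delta_small k : delta k ^+ 2 <= (n + 1) * epsn R k.
  apply: quadratic_lb n0 _ => t; have := m_lb (a_ k + (t%:C)%C *: b).
  by rewrite energy_shift /delta /n; have := a_min k; lra.
have delta_close k : (delta k - (re (ip (p b) xi) - re (L b))) ^+ 2
                     <= n * nrm ip (p (a_ k) - xi).
  have -> : delta k - (re (ip (p b) xi) - re (L b))
            = re (ip (p b) (p (a_ k) - xi)).
    by rewrite (ipBr Hh) /delta; complex_parts; ring.
  have := cauchy_schwarz Hh (p b) (p (a_ k) - xi); rewrite /sqmod.
  by have := sqr_ge0 (im (ip (p b) (p (a_ k) - xi))); lra.
apply/eqP; rewrite -subr_eq0 -sqrf_eq0; apply/eqP.
apply: le_small_eq0 => [|e e0]; first exact: sqr_ge0.
have n1 : 0 < 4 * (n + 1) by rewrite pmulr_rgt0 // ltr_wpDl.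
have [N1 hN1] := epsn_small (divr_gt0 e0 n1).
have [N2 hN2] := converges_nrm Hh lim_xi (divr_gt0 e0 n1).
pose k := maxn N1 N2; have := hN1 k (leq_maxl _ _); have := hN2 k (leq_maxr _ _).
rewrite !ltr_pdivlMr // => h2 h1.
have := delta_small k; have := delta_close k; have := nrm_ge0 Hh (p (a_ k) - xi).
move: (delta k) (re (ip (p b) xi) - re (L b)) => dk d; nra.
Qed.
End MinimizingSequence.

(* The infimum of the energy is approached by a minimizing sequence, whose
   limit represents [L]: the real parts of [<p a, xi>] and [L a] agree by
   [euler_lagrange], and the imaginary parts by applying it to ['i a]. *)
Lemma riesz : exists xi, forall a, ip (p a) xi = L a.
Proof.
pose E : set R := range energy.
have infE : has_inf E.
  by split; [exists (energy 0), 0 | exists (- M) => _ [a _ <-]; exact: energy_lb].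
have m_lb a : inf E <= energy a by apply: (ge_inf infE.2); exists a.
have approx k : exists a, energy a < inf E + epsn R k.
  by have [_ [a _ <-] ha] := inf_adherent (epsn_gt0 R k) infE; exists a.
have [a_ a_min] := choice approx.
have [xi lim_xi] := ip_complete Hh (minimizing_cauchy m_lb a_min).
exists xi => a; have EL := euler_lagrange m_lb a_min lim_xi.
apply: complex_ext; first exact: EL.
have := EL ('i%C *: a); rewrite (linZ plin) (ipZl Hh) (linZ Llin') /=.
by complex_parts; rewrite !mul0r !mul1r !sub0r => /oppr_inj.
Qed.

End Riesz.

Section Construction.
Variables (R : realType) (A : algType (complex R)) (st : A -> A).
Hypothesis HA : star_algebra st.
Variables (X : lmodType (complex R)) (lact : A -> X -> X) (ract : X -> A -> X).
Variable xst : X -> X.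
Hypothesis HX : star_bimodule st lact ract xst.
Variable F : X -> complex R.
Hypothesis HFlin : forall c x y, F (c *: x + y) = c * F x + F y.
Hypothesis HFherm : forall x, F (xst x) = (F x)^*.
Variable f : A -> complex R.
Hypothesis Hbound : forall x, exists Cx : complex R, 0 < Cx /\
  forall a, `|F (lact (st a) x)| ^+ 2 <= Cx * f (st a * a).
Variables (Hf : lmodType (complex R)) (ipf : Hf -> Hf -> complex R).
Variables (pi : A -> Hf) (rhof : A -> Hf -> Hf).
Hypothesis HGNS : GNS st f ipf pi rhof.

Let Hhf := gns_hilbert HGNS.
Let Df := GNS_domain pi.

Lemma dense_pi : dense_img ipf pi.
Proof.
move=> h e e0; have eC : (0 : complex R) < (e%:C)%C by rewrite ltcR.
by have [a] := gns_dense HGNS h eC; rewrite (sqdist_nrm Hhf) ltcR; exists a.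
Qed.

Lemma f_nrm a : f (st a * a) = (nrm ipf (pi a))%:C%C.
Proof. by rewrite -(gns_ip HGNS) (ip_self Hhf). Qed.

Lemma F_bound x : exists K : R, 0 <= K /\
  forall a, sqmod (F (lact (st a) x)) <= K * nrm ipf (pi a).
Proof.
have [Cx [/[dup] Cx0 + hCx]] := Hbound x; rewrite ltcE /= => /andP[/eqP imC reC].
exists (re Cx); split=> [|a]; first exact: ltW.
have := hCx a; rewrite f_nrm -add_Re2_Im2 lecE => /andP[_]; complex_parts.
by rewrite imC mul0r subr0.
Qed.

(* [F (a . x . d)] only depends on the class of [d] modulo the null space
   [N_f]: this is what makes [thetaF x] well defined on [D_f]. *)
Lemma F_null a x d : pi d = 0 -> F (ract (lact a x) d) = 0.
Proof.
move=> pd0; have [K [K0 hK]] := F_bound (ract (xst x) (st a)).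
have e : F (ract (lact a x) d) = (F (lact (st d) (ract (xst x) (st a))))^*.
  by rewrite -(lractA HX) -(xst_act HX) HFherm conjCK.
have := hK d; rewrite pd0 /nrm (ip0l Hhf) /= mulr0 e; move: (F _) => z hz.
by apply: complex_eq0; apply/eqP; rewrite eq_le sqmod_ge0 andbT sqmodJ.
Qed.

Lemma F_wd a x b b' : pi b = pi b' ->
  F (ract (lact a x) b) = F (ract (lact a x) b').
Proof.
move=> pbb; apply/eqP; rewrite -subr_eq0; apply/eqP.
rewrite -(linB (g := F) HFlin) -(linB (g := ract (lact a x))) ?F_null //.
  by rewrite (linB (gns_lin HGNS)) pbb subrr.
by move=> c u v; rewrite (ract_linA HX).
Qed.

(* The matrix coefficients of [thetaF x] on [pi b]: a bounded conjugate-linear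
   functional of [pi a], represented by a vector of [Hf] (Riesz). *)
Lemma coefficient_vector x b :
  exists xi, forall a, ipf (pi a) xi = (F (ract (lact (st a) x) b))^*.
Proof.
have [K [K0 hK]] := F_bound (ract x b).
apply: (riesz Hhf (gns_lin HGNS)) K0 _ => [c a a'|a].
  rewrite (st_conjlin HA) (lact_linA HX) (ract_linX HX) HFlin.
  by rewrite rmorphD rmorphM /= conjCK.
by rewrite /= sqmodJ (lractA HX).
Qed.

Definition coefficients (thetaF : X -> Hf -> Hf) :=
  forall x a b, ipf (pi a) (thetaF x (pi b)) = (F (ract (lact (st a) x) b))^*.

(* Choose a representing vector for each pair [(x, h)] with [h] in [D_f];
   its value off [D_f] is irrelevant. *)
Lemma coefficients_exist : exists thetaF, coefficients thetaF.
Proof.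
have : forall xh : X * Hf, exists xi, forall b, xh.2 = pi b ->
    forall a, ipf (pi a) xi = (F (ract (lact (st a) xh.1) b))^*.
  move=> [x h]; have [[b0 ->]|nDh] := pselect (exists b, h = pi b).
    have [xi hxi] := coefficient_vector x b0.
    by exists xi => b /= pb a; rewrite hxi (F_wd _ _ pb).
  by exists 0 => b /= hb; case: nDh; exists b.
case/choice => th hth; exists (fun x h => th (x, h)) => x a b.
exact: hth.
Qed.

Lemma rhof_star_rep : star_rep st ipf Df rhof.
Proof.
split.
- by move=> a _ [b ->]; rewrite (gns_rho HGNS); exists (a * b).
- move=> a c _ _ [b1 ->] [b2 ->].
  by rewrite -(gns_lin HGNS) !(gns_rho HGNS) mulrDr -scalerAr (gns_lin HGNS).
- by move=> c a b _ [d ->]; rewrite !(gns_rho HGNS) mulrDl -scalerAl (gns_lin HGNS).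
- by move=> a b _ [d ->]; rewrite !(gns_rho HGNS) mulrA.
- move=> a _ _ [b ->] [d ->].
  by rewrite !(gns_rho HGNS) !(gns_ip HGNS) (st_mul HA) (st_invol HA) mulrA.
- by move=> _ [b ->]; rewrite (gns_rho HGNS) mul1r.
Qed.

Section Representation.
Variable thetaF : X -> Hf -> Hf.
Hypothesis thetaF_coef : coefficients thetaF.

Lemma thetaF_coef' x a b :
  ipf (thetaF x (pi b)) (pi a) = F (ract (lact (st a) x) b).
Proof. by rewrite (ip_conjsym Hhf) thetaF_coef conjCK. Qed.

Let uniqf := dense_unique Hhf dense_pi.

Lemma thetaF_star x phi psi : Df phi -> Df psi ->
  ipf (thetaF x phi) psi = ipf phi (thetaF (xst x) psi).
Proof.
move=> [b ->] [a ->]; rewrite thetaF_coef' thetaF_coef.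
by rewrite -HFherm (xst_act HX) (st_invol HA) (xst_invol HX).
Qed.

(* Every axiom of a *-representation of the bimodule reduces, on matrix
   coefficients against the dense set [pi A], to an identity of [F]. *)
Lemma thetaF_rep : bimod_rep st lact ract xst ipf Df thetaF rhof.
Proof.
split.
- exact: rhof_star_rep.
- move=> x; split; last by exists (thetaF (xst x)); apply: thetaF_star.
  move=> c _ _ [b1 ->] [b2 ->]; rewrite -(gns_lin HGNS); apply: uniqf => a.
  rewrite thetaF_coef (ipDr Hhf) (ipZr Hhf) !thetaF_coef.
  by rewrite (ract_linA HX) HFlin rmorphD rmorphM.
- move=> c x y _ [b ->]; apply: uniqf => a.
  rewrite thetaF_coef (ipDr Hhf) (ipZr Hhf) !thetaF_coef.
  by rewrite (lact_linX HX) (ract_linX HX) HFlin rmorphD rmorphM.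
- exact: thetaF_star.
- move=> a b x _ _ [c ->] [d ->]; rewrite !(gns_rho HGNS) !thetaF_coef'.
  by rewrite (st_mul HA) (st_invol HA) (lactM HX) (ractM HX) -!(lractA HX).
Qed.

Lemma thetaF_cyclic a b x :
  F (ract (lact a x) b) = ipf (thetaF x (rhof b (pi 1))) (rhof (st a) (pi 1)).
Proof. by rewrite !(gns_rho HGNS) !mulr1 thetaF_coef' (st_invol HA). Qed.

End Representation.

(* The unitary [U] is characterized by
   [<rho a psi, U h> = <pi a, h>]; it exists by the Riesz lemma. *)
Section Uniqueness.
Variables (H : lmodType (complex R)) (ip : H -> H -> complex R) (D : H -> Prop).
Variables (theta : X -> H -> H) (rho : A -> H -> H) (psi : H).
Hypothesis hH : hilbert ip.
Hypothesis hD : dense_subspace ip D.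
Hypothesis hrep : bimod_rep st lact ract xst ip D theta rho.
Hypothesis Dpsi : D psi.
Hypothesis psi_cyclic : forall h, D h <-> exists a, h = rho a psi.
Hypothesis f_psi : forall a, f a = ip (rho a psi) psi.
Hypothesis F_psi : forall a b x,
  F (ract (lact a x) b) = ip (theta x (rho b psi)) (rho (st a) psi).
Variable thetaF : X -> Hf -> Hf.
Hypothesis thetaF_coef : coefficients thetaF.

Let hrho := brep_rho hrep.

Let pH a := rho a psi.

Lemma pH_lin c a b : pH (c *: a + b) = c *: pH a + pH b.
Proof. by have := rep_linA hrho c a b Dpsi. Qed.

Lemma D_pH a : D (pH a).
Proof. by have := rep_stable hrho a Dpsi. Qed.

Lemma pH_ip a b : ip (pH a) (pH b) = ipf (pi a) (pi b).
Proof.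
rewrite (gns_ip HGNS) f_psi (rep_mul hrho _ _ Dpsi).
by rewrite (rep_star hrho _ (D_pH a) Dpsi) (st_invol HA).
Qed.

Lemma dense_pH : dense_img ip pH.
Proof.
move=> h e e0; have eC : (0 : complex R) < (e%:C)%C by rewrite ltcR.
have [d [Dd hd]] := dsdense hD h eC; have [a da] := (psi_cyclic d).1 Dd.
by exists a; move: hd; rewrite (sqdist_nrm hH) ltcR da.
Qed.

Let uniqH := dense_unique hH dense_pH.

Lemma intertwiner_exists :
  exists U : Hf -> H, forall h a, ip (pH a) (U h) = ipf (pi a) h.
Proof.
have : forall h, exists xi, forall a, ip (pH a) xi = ipf (pi a) h.
  move=> h; apply: (riesz hH pH_lin (M := nrm ipf h)) => [c a b||a].
  - by rewrite (gns_lin HGNS) (ip_linl Hhf).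
  - exact: nrm_ge0 Hhf h.
  - by rewrite /nrm pH_ip mulrC cauchy_schwarz.
by case/choice => U hU; exists U.
Qed.

Section Intertwiner.
Variable U : Hf -> H.
Hypothesis U_coef : forall h a, ip (pH a) (U h) = ipf (pi a) h.

Lemma U_pi b : U (pi b) = pH b.
Proof. by apply: uniqH => a; rewrite U_coef pH_ip. Qed.

Lemma U_lin c h k : U (c *: h + k) = c *: U h + U k.
Proof.
apply: uniqH => a.
by rewrite U_coef (ipDr hH) (ipZr hH) !U_coef (ipDr Hhf) (ipZr Hhf).
Qed.

(* [U] is onto: the preimage of [y] is the Riesz vector of [a |-> <pH a, y>]. *)
Lemma U_onto y : exists h, U h = y.
Proof.
have [h hh] : exists h, forall a, ipf (pi a) h = ip (pH a) y.
  apply: (riesz Hhf (gns_lin HGNS) (M := nrm ip y)) => [c a b||a].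
  - by rewrite pH_lin (ip_linl hH).
  - exact: nrm_ge0 hH y.
  - by rewrite /nrm -pH_ip mulrC cauchy_schwarz.
by exists h; apply: uniqH => a; rewrite U_coef hh.
Qed.

Lemma U_bound h : nrm ip (U h) <= 7 * nrm ipf h.
Proof.
apply: (dual_bound hH dense_pH (nrm_ge0 Hhf h)) => a.
by rewrite U_coef /nrm pH_ip mulrC cauchy_schwarz.
Qed.

(* [U] preserves inner products: [<U h, U k> - <h, k>] is a bounded linear
   functional of [h] vanishing on the dense set [pi A]. *)
Lemma U_isom h k : ip (U h) (U k) = ipf h k.
Proof.
apply/eqP; rewrite -subr_eq0; apply/eqP; move: h.
apply: (dense_bounded_zero Hhf dense_pi (K := 100 * nrm ipf k)) => [h h'|a|h].
- by rewrite (linB U_lin) (ipBl hH) (ipBl Hhf); ring.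
- by rewrite U_pi U_coef subrr.
apply: le_trans (sqmodB_le _ _) _.
have := cauchy_schwarz hH (U h) (U k); have := cauchy_schwarz Hhf h k.
have := U_bound h; have := U_bound k; have := nrm_ge0 hH (U h).
have := nrm_ge0 Hhf h; have := nrm_ge0 Hhf k; have := nrm_ge0 hH (U k).
by nra.
Qed.

Lemma U_unitary : unitary ipf ip U.
Proof. by split; [exact: U_lin | exact: U_isom | exact: U_onto]. Qed.

Lemma U_rho a g : GNS_domain pi g -> rho a (U g) = U (rhof a g).
Proof.
by case=> b ->; rewrite (gns_rho HGNS) !U_pi /pH (rep_mul hrho _ _ Dpsi).
Qed.

Lemma U_theta x g : GNS_domain pi g -> theta x (U g) = U (thetaF x g).
Proof.
case=> b ->; rewrite U_pi; apply: uniqH => a.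
by rewrite U_coef thetaF_coef /pH (ip_conjsym hH) F_psi (st_invol HA).
Qed.

Lemma U_domain h : D h <-> exists g, GNS_domain pi g /\ h = U g.
Proof.
split; first by case/psi_cyclic => a ->; exists (pi a); split; [exists a | rewrite U_pi].
by case=> _ [[a ->] ->]; rewrite U_pi; exact: D_pH.
Qed.

Lemma U_cyclic : U (pi 1) = psi.
Proof. by rewrite U_pi /pH (rep_nondeg hrho Dpsi). Qed.
End Intertwiner.

End Uniqueness.
End Construction.

Unset Implicit Arguments.

Theorem theorem5p1 (R : realType)
  (A : algType (complex R)) (st : A -> A) (HA : star_algebra st)
  (X : lmodType (complex R)) (lact : A -> X -> X) (ract : X -> A -> X) (xst : X -> X)
  (HX : star_bimodule st lact ract xst)
  (F : X -> complex R)
  (HFlin : forall (c : complex R) x y, F (c *: x + y) = c * F x + F y)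
  (HFherm : forall x, F (xst x) = (F x)^*)
  (f : A -> complex R)
  (Hflin : forall (c : complex R) a b, f (c *: a + b) = c * f a + f b)
  (Hfpos : forall a, 0 <= f (st a * a))
  (Hbound : forall x, exists Cx : complex R, 0 < Cx /\
              forall a, `|F (lact (st a) x)| ^+ 2 <= Cx * f (st a * a))
  (Hf : lmodType (complex R)) (ipf : Hf -> Hf -> complex R)
  (pi : A -> Hf) (rhof : A -> Hf -> Hf) (HGNS : GNS st f ipf pi rhof) :
  exists thetaF : X -> Hf -> Hf,
    bimod_rep st lact ract xst ipf (GNS_domain pi) thetaF rhof /\
    (forall a b x, F (ract (lact a x) b) = ipf (thetaF x (rhof b (pi 1))) (rhof (st a) (pi 1))) /\
    (forall (H : lmodType (complex R)) (ip : H -> H -> complex R) (D : H -> Prop)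
            (theta : X -> H -> H) (rho : A -> H -> H) (psi : H),
       hilbert ip -> dense_subspace ip D ->
       bimod_rep st lact ract xst ip D theta rho ->
       D psi ->
       (forall h, D h <-> exists a, h = rho a psi) ->
       (forall a, f a = ip (rho a psi) psi) ->
       (forall a b x, F (ract (lact a x) b) = ip (theta x (rho b psi)) (rho (st a) psi)) ->
       exists U : Hf -> H,
         unitary ipf ip U /\
         U (pi 1) = psi /\
         (forall h, D h <-> exists g, GNS_domain pi g /\ h = U g) /\
         (forall a g, GNS_domain pi g -> rho a (U g) = U (rhof a g)) /\
         (forall x g, GNS_domain pi g -> theta x (U g) = U (thetaF x g))).
Proof.
have [thetaF coef] := coefficients_exist HA HX HFlin HFherm Hbound HGNS.
exists thetaF; split; first exact: (thetaF_rep HA HX HFlin HFherm HGNS coef).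
split; first exact: (thetaF_cyclic HA HGNS coef).
move=> H ip D theta rho psi hH hD hrep Dpsi cyclic f_psi F_psi.
have [U U_coef] := intertwiner_exists HA HGNS hH hrep Dpsi f_psi.
exists U; split; first exact: (U_unitary HA HGNS hH hD hrep Dpsi cyclic f_psi U_coef).
split; first exact: (U_cyclic HA HGNS hH hD hrep Dpsi cyclic f_psi U_coef).
split; first exact: (U_domain HA HGNS hH hD hrep Dpsi cyclic f_psi U_coef).
split; first exact: (U_rho HA HGNS hH hD hrep Dpsi cyclic f_psi U_coef).
exact: (U_theta HA HGNS hH hD hrep Dpsi cyclic f_psi F_psi coef U_coef).
Qed.
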